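(* Let $R$ be a noetherian ring, $\nu$ a valuation having a center on $R$, $b\in R\setminus\mathrm{supp}(\nu)$ and $a_1,\ldots,a_r\in R$ with $\nu(b)\le\nu(a_i)$ for all $i$, and let $R'=(R/J(b))[a_1/b,\ldots,a_r/b]\subseteq R_b$. Then for every $c'\in R'$ there is $c\in R$ with $\mathrm{ann}_{R'}(c')=\mathrm{ann}_{R'}(c/1)$. Moreover, if $\mathrm{ann}_{R'}(c')$ is a prime ideal of $R'$, then $\mathrm{ann}_R(b^Nc)$ is a prime ideal of $R$ for some $N\in\mathbb N$.
   Context: A valuation on a ring $R$ is a map $\nu:R\to\Gamma\cup\{\infty\}$ ($\Gamma$ an ordered abelian group) with $\nu(ab)=\nu(a)+\nu(b)$, $\nu(a+b)\ge\min\{\nu(a),\nu(b)\}$, $\nu(1)=0$, $\nu(0)=\infty$, whose support $\mathrm{supp}(\nu)=\{a:\nu(a)=\infty\}$ is a minimal prime ideal; $\nu$ has a center on $R$ if $\nu\ge0$ on $R$. For $b\in R$, $J(b)=\bigcup_{i\ge1}\mathrm{ann}_R(b^i)$ is the kernel of $R\to R_b$, so $R/J(b)$ is identified with its image in $R_b$. *)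

From HB Require Import structures.
From mathcomp Require Import all_boot all_order all_algebra.
Set Implicit Arguments.
Unset Strict Implicit.
Unset Printing Implicit Defensive.
Import GRing.Theory.
Local Open Scope ring_scope.

Section Ideals.
Variable R : comPzRingType.

Definition ideal (I : R -> Prop) : Prop :=
  [/\ I 0, (forall x y, I x -> I y -> I (x + y)) & (forall s x, I x -> I (s * x))].

Definition prime_ideal (I : R -> Prop) : Prop :=
  [/\ ideal I, ~ I 1 & forall x y, I (x * y) -> I x \/ I y].

Definition minimal_prime (I : R -> Prop) : Prop :=
  prime_ideal I /\
  forall P : R -> Prop, prime_ideal P -> (forall x, P x -> I x) -> forall x, I x -> P x.

Definition noetherian : Prop :=
  forall I : nat -> R -> Prop, (forall n, ideal (I n)) ->
    (forall n x, I n x -> I n.+1 x) ->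
    exists N, forall n x, (N <= n)%N -> I n x -> I N x.

Definition ann (c : R) : R -> Prop := fun x => x * c = 0.
End Ideals.

(* Gamma \cup {oo} is modelled as [option G], with [None] = oo. *)
Section Valuations.
Variable G : zmodType.
Variable le : rel G.

Definition ordered_abelian_group : Prop :=
  [/\ reflexive le, transitive le, antisymmetric le, total le &
      forall x y z, le x y -> le (x + z) (y + z)].

Definition ole (x y : option G) : bool :=
  match x, y with
  | _, None => true
  | None, Some _ => false
  | Some u, Some v => le u v
  end.

Definition oadd (x y : option G) : option G :=
  match x, y with
  | Some u, Some v => Some (u + v)
  | _, _ => None
  end.

Definition omin (x y : option G) : option G := if ole x y then x else y.

Variable R : comPzRingType.

Definition supp (nu : R -> option G) : R -> Prop := fun a => nu a = None.

Definition valuation (nu : R -> option G) : Prop :=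
  ordered_abelian_group /\
  [/\ (forall x y, nu (x * y) = oadd (nu x) (nu y)),
      (forall x y, ole (omin (nu x) (nu y)) (nu (x + y))),
      nu 1 = Some 0, nu 0 = None & minimal_prime (supp nu)].

Definition has_center (nu : R -> option G) : Prop :=
  forall x, ole (Some 0) (nu x).
End Valuations.

(* An element x / b^n of R_b is represented by the pair (x, n); two pairs
   represent the same element iff [feq]. *)
Section Localization.
Variable R : comPzRingType.
Variable b : R.

Definition locfrac := (R * nat)%type.

Definition feq (p q : locfrac) : Prop :=
  exists k : nat, b ^+ k * (b ^+ q.2 * p.1 - b ^+ p.2 * q.1) = 0.

Definition fadd (p q : locfrac) : locfrac := (b ^+ q.2 * p.1 + b ^+ p.2 * q.1, (p.2 + q.2)%N).
Definition fmul (p q : locfrac) : locfrac := (p.1 * q.1, (p.2 + q.2)%N).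
Definition fof (x : R) : locfrac := (x, 0%N).

Variable r : nat.
Variable a : 'I_r -> R.

(* R' = (R/J(b))[a_1/b, ..., a_r/b] inside R_b: the smallest subring of R_b
   containing the image of R and the a_i/b. *)
Inductive in_R' : locfrac -> Prop :=
  | inR'_of x : in_R' (fof x)
  | inR'_gen i : in_R' (a i, 1%N)
  | inR'_add p q : in_R' p -> in_R' q -> in_R' (fadd p q)
  | inR'_mul p q : in_R' p -> in_R' q -> in_R' (fmul p q)
  | inR'_eq p q : feq p q -> in_R' p -> in_R' q.

Definition annR' (c' : locfrac) : locfrac -> Prop :=
  fun d => in_R' d /\ feq (fmul d c') (fof 0).

Definition idealR' (P : locfrac -> Prop) : Prop :=
  [/\ (forall d, P d -> in_R' d),
      (forall d e, feq d e -> P d -> P e),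
      P (fof 0),
      (forall d e, P d -> P e -> P (fadd d e)) &
      (forall s d, in_R' s -> P d -> P (fmul s d))].

Definition prime_idealR' (P : locfrac -> Prop) : Prop :=
  [/\ idealR' P, ~ P (fof 1) &
      forall d e, in_R' d -> in_R' e -> P (fmul d e) -> P d \/ P e].
End Localization.

(* Writing c' = c/b^n, the denominator is a unit of R_b, so ann_{R'}(c')
   only depends on the numerator c.  Its contraction to R is the union of
   the increasing chain ann_R(b^k c), which stabilises at some N because R
   is noetherian; as every x in R is also an element x/1 of R', primality of
   ann_{R'}(c') then passes to ann_R(b^N c). *)
From HB Require Import structures.
From mathcomp Require Import all_boot all_order all_algebra.
Set Implicit Arguments.
Unset Strict Implicit.
Unset Printing Implicit Defensive.
Import GRing.Theory.
Local Open Scope ring_scope.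

Section Annihilators.
Variable R : comPzRingType.

Lemma ideal_ann (c : R) : ideal (ann c).
Proof.
rewrite /ann; split=> [|x y hx hy|s x hx]; first by rewrite mul0r.
  by rewrite mulrDl hx hy addr0.
by rewrite -mulrA hx mulr0.
Qed.

Variable b : R.

(* The contraction to R of ann_{R_b}(c/1). *)
Definition ann_loc (c : R) : R -> Prop :=
  fun y => exists k : nat, b ^+ k * (y * c) = 0.

Lemma ann_expS (n : nat) (c x : R) : ann (b ^+ n * c) x -> ann (b ^+ n.+1 * c) x.
Proof.
rewrite /ann exprS => hx.
by rewrite -mulrA mulrCA hx mulr0.
Qed.

Lemma ann_loc_exp (c y : R) : ann_loc c y <-> (exists k, ann (b ^+ k * c) y).
Proof.
by split=> -[k hk]; exists k; rewrite /ann mulrCA in hk *.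
Qed.

Lemma noetherian_ann_loc (c : R) :
  noetherian R -> exists N : nat, forall y, ann_loc c y <-> ann (b ^+ N * c) y.
Proof.
move=> noeth.
have [N stable] := noeth (fun n => ann (b ^+ n * c)) (fun n => ideal_ann _)
  (@ann_expS^~ c).
exists N => y; split=> [/ann_loc_exp [k hk] | hN]; last by apply/ann_loc_exp; exists N.
have [leNk | ltkN] := leqP N k; first exact: stable hk.
rewrite -(subnKC (ltnW ltkN)); elim: (N - k)%N => [|m IHm]; first by rewrite addn0.
by rewrite addnS; apply: ann_expS.
Qed.

Variables (r : nat) (a : 'I_r -> R).

Lemma feq_fmul0 (d c' : locfrac R) :
  feq b (fmul d c') (fof 0) <-> ann_loc c'.1 d.1.
Proof.
rewrite /feq /ann_loc /= mul1r mulr0.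
by split=> -[k hk]; exists k; rewrite subr0 in hk *.
Qed.

Lemma annR'_numerator (c' d : locfrac R) : annR' b a c' d <-> annR' b a (fof c'.1) d.
Proof. by split=> -[in_d /feq_fmul0 ann_d]; split=> //; apply/feq_fmul0. Qed.

Lemma annR'_fof (c' : locfrac R) (y : R) : annR' b a c' (fof y) <-> ann_loc c'.1 y.
Proof.
split=> [[_ /feq_fmul0] // | ann_y]; split; [exact: inR'_of | exact/feq_fmul0].
Qed.

Lemma prime_ann_contraction (c' : locfrac R) (N : nat) :
  (forall y, ann_loc c'.1 y <-> ann (b ^+ N * c'.1) y) ->
  prime_idealR' b a (annR' b a c') -> prime_ideal (ann (b ^+ N * c'.1)).
Proof.
move=> annN [_ not_unit prime'].
have annR'E y : annR' b a c' (fof y) <-> ann (b ^+ N * c'.1) y.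
  exact: iff_trans (annR'_fof c' y) (annN y).
split=> [|/annR'E/not_unit //|x y /annR'E xy]; first exact: ideal_ann.
by case: (prime' _ _ (inR'_of b a x) (inR'_of b a y) xy) => /annR'E; [left|right].
Qed.

End Annihilators.

Theorem mainTheorem8 (R : comPzRingType) (G : zmodType) (le : rel G)
    (nu : R -> option G) (b : R) (r : nat) (a : 'I_r -> R) :
  noetherian R ->
  valuation le nu ->
  has_center le nu ->
  ~ supp nu b ->
  (forall i, ole le (nu b) (nu (a i))) ->
  forall c' : locfrac R, in_R' b a c' ->
  exists c : R,
    (forall d, annR' b a c' d <-> annR' b a (fof c) d) /\
    (prime_idealR' b a (annR' b a c') ->
       exists N : nat, prime_ideal (ann (b ^+ N * c))).
Proof.
move=> noeth _ _ _ _ c' _; exists c'.1; split; first exact: annR'_numerator.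
have [N annN] := noetherian_ann_loc b c'.1 noeth.
by move=> prime'; exists N; apply: prime_ann_contraction annN prime'.
Qed.
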